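(* Let $n\ge 0$ and $i,j\ge -1$ be integers with $i+j=n-1$, and let $p\in\Gamma_n$ be written as a concatenation $p=c\,q_2\,b\,q_1\,a$ of paths with $q_1\in\Gamma_i$ and $q_2\in\Gamma_j$. If $i$ is odd then $a$ is trivial, and if $j$ is odd then $c$ is trivial. In particular, if $i$ and $j$ are both odd, then the only such decomposition of $p$ is $p=\sigma_j(p)\,b\,\pi_i(p)$.
   Context: Let $\Bbbk$ be a field, $Q=(Q_0,Q_1,s,t)$ a finite quiver, and $A=\Bbbk Q/I$ a finite-dimensional monomial algebra, i.e. $I$ is an ideal generated by paths of length at least $2$. Paths are written from right to left: a path is $p=\alpha_n\cdots\alpha_1$ with arrows $\alpha_i$ and $t(\alpha_i)=s(\alpha_{i+1})$; vertices are the paths of length $0$ (trivial paths); $qp$ denotes concatenation when $t(p)=s(q)$. Let $\mathcal B$ be the set of paths not lying in $I$. If $p=bqa$ for paths $a,b,q$, then $q$ is a divisor of $p$; if $b$ is trivial, $q$ is a suffix; if $a$ is trivial, $q$ is a prefix; proper means $q\neq p$. For $n\ge -1$, a left $n$-ambiguity is a path $p$ with a decomposition $p=u_{-1}u_0u_1\cdots u_n$ such that $u_{-1}\in Q_0$, $u_0\in Q_1$, $u_i\in\mathcal B$ for all $i$, and for every $0\le i\le n-1$, $u_iu_{i+1}\in I$ while no proper suffix of $u_iu_{i+1}$ lies in $I$ (one writes $p=u_0\cdots u_n$). A right $n$-ambiguity is a path with a decomposition $p=v_n\cdots v_0v_{-1}$ with $v_{-1}\in Q_0$, $v_0\in Q_1$,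 $v_i\in\mathcal B$, and for $0\le i\le n-1$, $v_{i+1}v_i\in I$ while no proper prefix of $v_{i+1}v_i$ lies in $I$. A path is a left $n$-ambiguity iff it is a right $n$-ambiguity; such paths are called $n$-ambiguities, and $\Gamma_n$ denotes their set. Both decompositions of an $n$-ambiguity are unique. For $p\in\Gamma_n$ with left decomposition $u_0\cdots u_n$ and right decomposition $v_n\cdots v_0$, and $-1\le m\le n$, set $\sigma_m(p):=u_0\cdots u_m$ (a suffix of $p$ which is an $m$-ambiguity) and $\pi_m(p):=v_m\cdots v_0$ (a prefix of $p$ which is an $m$-ambiguity). *)

From mathcomp Require Import all_boot all_order all_algebra.
Set Implicit Arguments. Unset Strict Implicit. Unset Printing Implicit Defensive.
Import Order.TTheory GRing.Theory Num.Theory.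

(* A path is represented as (starting vertex, list of arrows in traversal
   order).  The paper's path  alpha_n ... alpha_1  (written right to left)
   is  (s alpha_1, [:: alpha_1; ...; alpha_n]);  the trivial path at v is
   (v, [::]). *)
Section Quiver.
Variables (V E : finType) (s t : E -> V).

Definition qpath := (V * seq E)%type.

Definition qstart (p : qpath) : V := p.1.
Definition qtarget (p : qpath) : V := last p.1 [seq t a | a <- p.2].
Definition qlen (p : qpath) : nat := size p.2.

Definition qvalid (p : qpath) : bool :=
  sorted (fun a b => t a == s b) p.2 &&
  (if p.2 is a :: _ then s a == p.1 else true).

(* paper's concatenation  p q  (q first, then p); defined when t(q) = s(p) *)
Definition composable (p q : qpath) : bool := qtarget q == qstart p.
Definition pcat (p q : qpath) : qpath := (q.1, q.2 ++ p.2).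

Definition trivialp (p : qpath) : bool := qvalid p && (qlen p == 0).
Definition is_arrow (p : qpath) : bool := qvalid p && (qlen p == 1).

(* The monomial ideal I generated by the list of paths R (given by their
   arrow lists): a path lies in I iff some generator divides it. *)
Variable R : seq (seq E).
Definition inI (p : qpath) : bool := has (fun r => infix r p.2) R.
Definition inB (p : qpath) : bool := qvalid p && ~~ inI p.

Definition is_suffix (q p : qpath) : Prop :=
  qvalid q /\ exists a, [/\ qvalid a, composable q a & p = pcat q a].
Definition is_prefix (q p : qpath) : Prop :=
  qvalid q /\ exists b, [/\ qvalid b, composable b q & p = pcat b q].

(* left decomposition p = u_{-1} u_0 u_1 ... u_n, with us = [:: u_0; ...; u_n] *)
Definition left_decomp (p e : qpath) (us : seq qpath) : Prop :=
  [/\ trivialp e,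
      (if us is u0 :: _ then is_arrow u0 else True),
      all inB us,
      sorted composable (e :: us) /\ p = foldl pcat e us &
      forall k, k.+1 < size us ->
        let w := pcat (nth e us k) (nth e us k.+1) in
        inI w /\ forall q, is_suffix q w -> q <> w -> ~~ inI q].

(* right decomposition p = v_n ... v_0 v_{-1}, with vs = [:: v_0; ...; v_n] *)
Definition right_decomp (p e : qpath) (vs : seq qpath) : Prop :=
  [/\ trivialp e,
      (if vs is v0 :: _ then is_arrow v0 else True),
      all inB vs,
      sorted (fun x y => composable y x) (e :: vs) /\
        p = foldl (fun acc v => pcat v acc) e vs &
      forall k, k.+1 < size vs ->
        let w := pcat (nth e vs k.+1) (nth e vs k) in
        inI w /\ forall q, is_prefix q w -> q <> w -> ~~ inI q].

Definition Gamma (m : int) (p : qpath) : Prop :=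
  (-1 <= m)%R /\ exists e us, size us = `|(m + 1)%R|%N /\ left_decomp p e us.

(* sigma_m(p) = u_{-1} u_0 ... u_m   and   pi_m(p) = v_m ... v_0 v_{-1},
   computed from a given left (resp. right) decomposition *)
Definition amb_sigma (m : int) (e : qpath) (us : seq qpath) : qpath :=
  foldl pcat e (take `|(m + 1)%R|%N us).
Definition amb_pi (m : int) (e : qpath) (vs : seq qpath) : qpath :=
  foldl (fun acc v => pcat v acc) e (take `|(m + 1)%R|%N vs).

End Quiver.

Definition is_relation (V E : finType) (s t : E -> V) (r : seq E) : bool :=
  (2 <= size r) && (if r is a :: _ then qvalid s t (s a, r) else false).

From mathcomp Require Import all_boot all_order all_algebra.
From mathcomp Require Import zify.
Set Implicit Arguments. Unset Strict Implicit. Unset Printing Implicit Defensive.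

(* Read a path as its word of arrows.  The left decomposition of an
   n-ambiguity becomes a chain of n+2 cut points moving leftwards through the
   word, each as far right as possible given the one two steps earlier; the
   right decomposition is the mirror image.  Such greedy chains are monotone:
   a chain starting weakly to the left of another stays weakly to the left,
   step for step, and also two steps at a time with any offset.  In
   p = c q_2 b q_1 a the chain of p has passed the start of q_2, hence the end
   of q_1, after j+1 steps; when i is odd, its remaining i+1 steps run in
   pairs against the chain of q_1, which must therefore start at the left end
   of the word, so a is trivial.  The claim for c is the mirror argument with
   right chains, which exist by a greedy left-to-right construction.  For i
   and j odd the same comparisons identify q_2 with sigma_j(p) and q_1 with
   pi_i(p). *)

(** * Greedy chains of cut points *)

Section GreedyChains.

Variable B : nat -> nat -> bool.
Hypothesis B_widen : forall {z e z' e'}, B z e -> z' <= z -> e <= e' -> B z' e'.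
Hypothesis B_long : forall z e, B z e -> z.+2 <= e.

(* For a left decomposition u_0 ... u_n, [l k] is where u_k ends in the arrow
   word, N = n + 1, and [B z e] says that the factor [z, e) lies in I.  In a
   right chain for v_n ... v_0, [r k] is where v_k starts. *)
Definition left_chain x y N (l : nat -> nat) : Prop :=
  [/\ l 0 = y, l N = x, (0 < N -> l 0 = (l 1).+1),
      (forall k, k.+2 <= N ->
         B (l k.+2) (l k) /\ forall z, l k.+2 < z -> ~~ B z (l k)) &
      (forall k, 0 < k -> k < N -> ~~ B (l k.+1) (l k))].

Definition right_chain x y N (r : nat -> nat) : Prop :=
  [/\ r 0 = x, r N = y, (0 < N -> r 1 = (r 0).+1),
      (forall k, k.+2 <= N ->
         B (r k) (r k.+2) /\ forall z, z < r k.+2 -> ~~ B (r k) z) &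
      (forall k, 0 < k -> k < N -> ~~ B (r k) (r k.+1))].

Section Left.
Variables (x y N : nat) (l : nat -> nat).
Hypothesis chain_l : left_chain x y N l.

Lemma left_chain_ltn k : k < N -> l k.+1 < l k.
Proof.
case: chain_l => _ _ l_arrow l_rel l_good; case: k => [|k] ltkN.
  by rewrite l_arrow.
have [l_bad _] := l_rel k ltkN.
have l_good0 : ~~ B (l k.+1) (l k).
  case: k ltkN l_bad => [|k] ltkN _; last by apply: l_good; lia.
  by apply/negP => /B_long; rewrite l_arrow //; lia.
rewrite ltnNge; apply: contra l_good0 => le_l.
exact: B_widen l_bad le_l (leqnn _).
Qed.

Lemma left_chain_gap k k' : k <= k' <= N -> l k' + (k' - k) <= l k.
Proof.
case/andP; elim: k' => [|k' IH] lekk' lek'N; first by case: k lekk' => // _; rewrite addn0.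
case: (ltngtP k k'.+1) lekk' => // [ltkk'|<-] _; last by rewrite subnn addn0.
have := IH ltkk' (ltnW lek'N); have := left_chain_ltn lek'N; lia.
Qed.

Lemma left_chain_le_start k : k <= N -> l k <= y.
Proof.
move=> lekN; have := @left_chain_gap 0 k lekN.
by case: chain_l => <- *; lia.
Qed.

End Left.

Lemma left_chain_step2 x y N l x' y' N' l' t u :
  left_chain x y N l -> left_chain x' y' N' l' ->
  t.+2 <= N' -> u.+2 <= N -> l' t <= l u -> l' t.+2 <= l u.+2.
Proof.
move=> [_ _ _ l_rel _] [_ _ _ l'_rel _] leN' leN le_tu.
have [l'_bad _] := l'_rel t leN'; have [_ l_min] := l_rel u leN.
rewrite leqNgt; apply/negP => /l_min.
by rewrite (B_widen l'_bad (leqnn _) le_tu).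
Qed.

Lemma left_chain_step2n x y N l x' y' N' l' t u m :
  left_chain x y N l -> left_chain x' y' N' l' -> l' t <= l u ->
  t + m.*2 <= N' -> u + m.*2 <= N -> l' (t + m.*2) <= l (u + m.*2).
Proof.
move=> chain_l chain_l' le_tu; elim: m => [|m IH] leN' leN; first by rewrite !addn0.
rewrite doubleS !addnS.
by apply: (left_chain_step2 chain_l chain_l'); rewrite -?addnS //; apply: IH; lia.
Qed.

Lemma left_chain_leq x y N l x' y' N' l' :
  left_chain x y N l -> left_chain x' y' N' l' -> l' 0 <= l 0 ->
  forall k, k <= N' -> k <= N -> l' k <= l k.
Proof.
move=> chain_l chain_l' le0 k.
rewrite -(odd_double_half k); case: (odd k) => /= leN' leN; last first.
  exact: (left_chain_step2n chain_l chain_l' le0).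
apply: (left_chain_step2n chain_l chain_l') => //.
case: chain_l chain_l' => _ _ l_arrow _ _ [_ _ l'_arrow _ _].
by move: le0; rewrite l_arrow ?l'_arrow; lia.
Qed.

Lemma left_chain_agree x y N l x' N' l' :
  left_chain x y N l -> left_chain x' y N' l' -> x <= x' -> l N' = x'.
Proof.
move=> chain_l chain_l' le_xx'.
have l0 : l 0 = l' 0 by case: chain_l chain_l' => -> _ _ _ _ [->].
have eq_ll' k : k <= N -> k <= N' -> l k = l' k.
  move=> leN leN'; apply/eqP; rewrite eqn_leq.
  rewrite (left_chain_leq chain_l' chain_l) ?(eq_leq l0) //.
  by rewrite (left_chain_leq chain_l chain_l') ?(eq_leq (esym l0)).
have leN'N : N' <= N.
  rewrite leqNgt; apply/negP => ltNN'.
  have := left_chain_gap chain_l' (k := N) (k' := N'); rewrite ltnW // leqnn.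
  rewrite -(eq_ll' N) ?(ltnW ltNN') //.
  by case: chain_l chain_l' => _ -> _ _ _ [_ -> _ _ _]; lia.
by rewrite eq_ll' //; case: chain_l' => _ ->.
Qed.

Lemma left_chain_parity m I J l x1 y1 l1 x2 y2 l2 :
  left_chain 0 m (I + J) l -> left_chain x1 y1 I l1 -> left_chain x2 y2 J l2 ->
  y2 <= m -> y1 <= x2 -> ~~ odd I -> x1 = 0.
Proof.
move=> chain_l chain_l1 chain_l2 le_y2m le_y1x2 evenI.
have le_x2 : x2 <= l J.
  case: (chain_l) (chain_l2) => l0 _ _ _ _ [l20 <- _ _ _].
  by apply: (left_chain_leq chain_l chain_l2); rewrite ?l0 ?l20 ?leq_addl.
have := left_chain_step2n (t := 0) (u := J) (m := I./2) chain_l chain_l1.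
have I2 : (I./2).*2 = I by rewrite -[RHS]odd_double_half (negbTE evenI).
rewrite I2 add0n addnC leqnn; case: chain_l chain_l1 => _ -> _ _ _ [l10 -> _ _ _].
by rewrite l10; lia.
Qed.

Section Right.
Variables (x y N : nat) (r : nat -> nat).
Hypothesis chain_r : right_chain x y N r.

Lemma right_chain_ltn k : k < N -> r k < r k.+1.
Proof.
case: chain_r => _ _ r_arrow r_rel r_good; case: k => [|k] ltkN.
  by rewrite r_arrow.
have [r_bad _] := r_rel k ltkN.
have r_good0 : ~~ B (r k) (r k.+1).
  case: k ltkN r_bad => [|k] ltkN _; last by apply: r_good; lia.
  by apply/negP => /B_long; rewrite r_arrow //; lia.
rewrite ltnNge; apply: contra r_good0 => le_r.
exact: B_widen r_bad (leqnn _) le_r.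
Qed.

Lemma right_chain_gap k k' : k <= k' <= N -> r k + (k' - k) <= r k'.
Proof.
case/andP; elim: k' => [|k' IH] lekk' lek'N; first by case: k lekk' => // _; rewrite addn0.
case: (ltngtP k k'.+1) lekk' => // [ltkk'|<-] _; last by rewrite subnn addn0.
have := IH ltkk' (ltnW lek'N); have := right_chain_ltn lek'N; lia.
Qed.

End Right.

Lemma right_chain_step2 x y N r x' y' N' r' t u :
  right_chain x y N r -> right_chain x' y' N' r' ->
  t.+2 <= N' -> u.+2 <= N -> r u <= r' t -> r u.+2 <= r' t.+2.
Proof.
move=> [_ _ _ r_rel _] [_ _ _ r'_rel _] leN' leN le_ut.
have [r'_bad _] := r'_rel t leN'; have [_ r_min] := r_rel u leN.
rewrite leqNgt; apply/negP => /r_min.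
by rewrite (B_widen r'_bad le_ut (leqnn _)).
Qed.

Lemma right_chain_step2n x y N r x' y' N' r' t u m :
  right_chain x y N r -> right_chain x' y' N' r' -> r u <= r' t ->
  t + m.*2 <= N' -> u + m.*2 <= N -> r (u + m.*2) <= r' (t + m.*2).
Proof.
move=> chain_r chain_r' le_ut; elim: m => [|m IH] leN' leN; first by rewrite !addn0.
rewrite doubleS !addnS.
by apply: (right_chain_step2 chain_r chain_r'); rewrite -?addnS //; apply: IH; lia.
Qed.

Lemma right_chain_leq x y N r x' y' N' r' :
  right_chain x y N r -> right_chain x' y' N' r' -> r 0 <= r' 0 ->
  forall k, k <= N' -> k <= N -> r k <= r' k.
Proof.
move=> chain_r chain_r' le0 k.
rewrite -(odd_double_half k); case: (odd k) => /= leN' leN; last first.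
  exact: (right_chain_step2n chain_r chain_r' le0).
apply: (right_chain_step2n chain_r chain_r') => //.
case: chain_r chain_r' => _ _ r_arrow _ _ [_ _ r'_arrow _ _].
by move: le0; rewrite r_arrow ?r'_arrow; lia.
Qed.

Lemma right_chain_agree x y N r y' N' r' :
  right_chain x y N r -> right_chain x y' N' r' -> y' <= y -> r N' = y'.
Proof.
move=> chain_r chain_r' le_y'y.
have r0 : r 0 = r' 0 by case: chain_r chain_r' => -> _ _ _ _ [->].
have eq_rr' k : k <= N -> k <= N' -> r k = r' k.
  move=> leN leN'; apply/eqP; rewrite eqn_leq.
  rewrite (right_chain_leq chain_r chain_r') ?(eq_leq r0) //.
  by rewrite (right_chain_leq chain_r' chain_r) ?(eq_leq (esym r0)).
have leN'N : N' <= N.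
  rewrite leqNgt; apply/negP => ltNN'.
  have := right_chain_gap chain_r' (k := N) (k' := N'); rewrite ltnW // leqnn.
  rewrite -(eq_rr' N) ?(ltnW ltNN') //.
  by case: chain_r chain_r' => _ -> _ _ _ [_ -> _ _ _]; lia.
by rewrite eq_rr' //; case: chain_r' => _ ->.
Qed.

Lemma right_chain_parity m I J r x1 y1 r1 x2 y2 r2 :
  right_chain 0 m (I + J) r -> right_chain x1 y1 I r1 -> right_chain x2 y2 J r2 ->
  y1 <= x2 -> ~~ odd J -> m <= y2.
Proof.
move=> chain_r chain_r1 chain_r2 le_y1x2 evenJ.
have le_y1 : r I <= y1.
  case: (chain_r1) (chain_r) => r10 <- _ _ _ [r0 _ _ _ _].
  by apply: (right_chain_leq chain_r chain_r1); rewrite ?r0 ?leq_addr.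
have := right_chain_step2n (t := 0) (u := I) (m := J./2) chain_r chain_r2.
have J2 : (J./2).*2 = J by rewrite -[RHS]odd_double_half (negbTE evenJ).
rewrite J2 add0n leqnn; case: chain_r chain_r2 => _ -> _ _ _ [r20 -> _ _ _].
by rewrite r20; lia.
Qed.

(* The least [e <= y] with [B z e], and [y.+1] if there is none. *)
Definition first_rel y z := find (B z) (iota 0 y.+1).

Lemma first_rel_le y z e : B z e -> e <= y -> first_rel y z <= e.
Proof.
move=> Bze le_ey; rewrite leqNgt; apply/negP => /(before_find 0).
by rewrite nth_iota ?add0n ?Bze //; lia.
Qed.

Lemma first_rel_spec y z : first_rel y z <= y -> B z (first_rel y z).
Proof.
move=> le_y; have has_rel : has (B z) (iota 0 y.+1) by rewrite has_find size_iota.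
by have := nth_find 0 has_rel; rewrite nth_iota ?add0n.
Qed.

Lemma first_rel_min y z e : e < first_rel y z -> ~~ B z e.
Proof.
move=> lt_e; have le_y : first_rel y z <= y.+1.
  by rewrite -(size_iota 0 y.+1) find_size.
by have := before_find 0 lt_e; rewrite nth_iota ?add0n => [->|]; lia.
Qed.

Fixpoint greedy x y k :=
  match k with 0 => x | 1 => x.+1 | k'.+2 => first_rel y (greedy x y k') end.

Section Greedy.
Variables (x y N : nat) (l : nat -> nat).
Hypothesis chain_l : left_chain x y N l.

Lemma greedy_invariant k : k < N ->
  greedy x y k <= l (N - k) /\ ~~ B (greedy x y k) (l (N - k.+1)).
Proof.
case: (chain_l) => _ lN l_arrow l_rel l_good.
elim/ltn_ind: k => -[_ ltkN|[_ ltkN|k IH ltkN]].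
- rewrite subn0 lN /=; split=> //.
  case: N ltkN l_arrow l_good lN => [|[|n]] // _ l_arrow l_good lN.
    by apply/negP => /B_long; rewrite -lN l_arrow //; lia.
  by rewrite -lN subn1 /=; apply: l_good.
- have := left_chain_ltn chain_l (k := N.-1); rewrite (prednK (ltnW ltkN)) lN subn1 => lt_x.
  have [_ l_min] := l_rel (N - 2) (ltac:(lia)).
  split; first by apply: lt_x; lia.
  by apply: l_min; rewrite /= (_ : (N - 2).+2 = N) ?lN; lia.
- have [le_gk good_gk] := IH k (leqnSn k.+1) (ltac:(lia)).
  set a := N - k.+3.
  have [Ea3 Ea2 Ea1] : [/\ N - k = a.+3, N - k.+1 = a.+2 & N - k.+2 = a.+1].
    by rewrite /a; split; lia.
  rewrite Ea3 in le_gk; rewrite Ea2 in good_gk; rewrite Ea1 /=.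
  have [l_bad1 _] := l_rel a.+1 (ltac:(rewrite /a; lia)).
  have [_ l_min] := l_rel a (ltac:(rewrite /a; lia)).
  have le_first : first_rel y (greedy x y k) <= l a.+1.
    apply: first_rel_le; first exact: B_widen l_bad1 le_gk (leqnn _).
    by apply: (left_chain_le_start chain_l); rewrite /a; lia.
  split=> //; apply: l_min; rewrite ltnNge; apply: contra good_gk => le_a2.
  apply: B_widen (first_rel_spec _) (leqnn _) le_a2.
  by apply: leq_trans le_first (left_chain_le_start chain_l _); rewrite /a; lia.
Qed.

Lemma greedy_last : greedy x y N = y.
Proof.
case: (chain_l) => l0 lN l_arrow l_rel _.
case: (ltngtP N 1) => [ltN1|ltN1|N1].
- by rewrite -l0 -lN (_ : N = 0) //; lia.
- have [le_g good_g] := greedy_invariant (k := N - 2) (ltac:(lia)).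
  have [E2 E1] : N - (N - 2) = 2 /\ N - (N - 2).+1 = 1 by lia.
  rewrite E2 in le_g; rewrite E1 in good_g.
  have [l_bad _] := l_rel 0 (ltac:(lia)).
  have le_first : first_rel y (greedy x y (N - 2)) <= y.
    by apply: first_rel_le (B_widen l_bad le_g (eq_leq l0)) (leqnn y).
  rewrite (_ : N = (N - 2).+2) /=; last lia.
  apply/eqP; rewrite eqn_leq le_first -[X in X <= _]l0 l_arrow; last lia.
  rewrite ltnNge; apply: contra good_g => le_l1.
  exact: B_widen (first_rel_spec le_first) (leqnn _) le_l1.
- by move: lN; rewrite N1 -l0 l_arrow => [<-|]; rewrite ?N1.
Qed.

Lemma greedy_le k : k <= N -> greedy x y k <= l (N - k).
Proof.
rewrite leq_eqVlt => /predU1P [->|/greedy_invariant [] //].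
by rewrite greedy_last subnn; case: chain_l => ->.
Qed.

(* The position-level form of: left n-ambiguities are right n-ambiguities. *)
Lemma right_chain_of_left : right_chain x y N (greedy x y).
Proof.
have le_y k : k <= N -> greedy x y k <= y.
  by move=> lekN; apply: leq_trans (greedy_le lekN) _; apply: (left_chain_le_start chain_l); lia.
split=> //; first exact: greedy_last.
- move=> k lek2N; split; last by move=> z; apply: first_rel_min.
  exact: first_rel_spec (le_y k.+2 lek2N).
- move=> k _ ltkN; have [_ good_gk] := greedy_invariant ltkN.
  apply: contra good_gk => bad_gk.
  by apply: B_widen bad_gk (leqnn _) (greedy_le ltkN).
Qed.

End Greedy.

End GreedyChains.

(** * Factors of arrow words *)

Definition seg (T : Type) (w : seq T) z e := drop z (take e w).

Lemma seg_seg (T : Type) (w : seq T) z e z' e' : z <= z' -> e' <= e ->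
  seg w z' e' = drop (z' - z) (take (e' - z) (seg w z e)).
Proof.
move=> le_zz' le_e'e; rewrite /seg take_drop drop_drop.
have [le_ze'|lt_e'z] := leqP z e'.
  by rewrite subnK // take_takel // subnK.
by rewrite !drop_oversize // size_take_min; lia.
Qed.

Lemma seg_drop (T : Type) (w : seq T) z z' e : z <= z' ->
  seg w z' e = drop (z' - z) (seg w z e).
Proof.
move=> le_zz'; rewrite (seg_seg w le_zz' (leqnn e)) take_oversize //.
by rewrite size_drop size_take_min; lia.
Qed.

Lemma seg_take (T : Type) (w : seq T) z e e' : e' <= e ->
  seg w z e' = take (e' - z) (seg w z e).
Proof. by move=> le_e'e; rewrite (seg_seg w (leqnn z) le_e'e) subnn drop0. Qed.

Lemma seg_cat (T : Type) (A q C : seq T) z e : e <= size q ->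
  seg (A ++ q ++ C) (size A + z) (size A + e) = seg q z e.
Proof.
move=> le_eq; rewrite /seg take_cat ltnNge leq_addr /= addKn takel_cat //.
by rewrite addnC -drop_drop drop_size_cat.
Qed.

Section Words.
Variables (E : eqType) (R : seq (seq E)).
Hypothesis R_long : forall r, r \in R -> 1 < size r.

Definition has_rel (w : seq E) z e := has (fun r => infix r (seg w z e)) R.

Lemma has_rel_widen w :
  forall z e z' e', has_rel w z e -> z' <= z -> e <= e' -> has_rel w z' e'.
Proof.
move=> z e z' e' /hasP [r Rr r_in] le_z'z le_ee'; apply/hasP; exists r => //.
move: r_in; rewrite (seg_seg w le_z'z le_ee') => /infix_trans; apply.
rewrite -[X in infix _ X](cat_take_drop (e - z')).
rewrite -[X in infix _ (X ++ _)](cat_take_drop (z - z')).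
exact/infix_catr/suffix_infix.
Qed.

Lemma has_rel_long w : forall z e, has_rel w z e -> z.+2 <= e.
Proof.
move=> z e /hasP [r /R_long long_r /size_infix].
by rewrite /seg size_drop size_take_min; lia.
Qed.

Lemma has_rel_cat A q C z e : e <= size q ->
  has_rel (A ++ q ++ C) (size A + z) (size A + e) = has_rel q z e.
Proof. by move=> le_eq; rewrite /has_rel seg_cat. Qed.

Lemma left_chain_cat A q C N l :
  left_chain (has_rel q) 0 (size q) N l ->
  left_chain (has_rel (A ++ q ++ C)) (size A) (size A + size q) N
    (fun k => size A + l k).
Proof.
move=> chain_l.
have le_q k : k <= N -> l k <= size q.
  exact: (left_chain_le_start (@has_rel_widen q) (@has_rel_long q) chain_l).
have cat_rel z k : k <= N ->
    has_rel (A ++ q ++ C) (size A + z) (size A + l k) = has_rel q z (l k).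
  by move=> lekN; rewrite has_rel_cat // le_q.
case: chain_l => l0 lN l_arrow l_rel l_good; split.
- by rewrite l0.
- by rewrite lN addn0.
- by move=> N_gt0; rewrite l_arrow // addnS.
- move=> k lek2N; have [l_bad l_min] := l_rel k lek2N.
  rewrite cat_rel; last lia; split=> // z lt_z.
  rewrite -(subnKC (ltnW (leq_ltn_trans (leq_addr _ _) lt_z))) cat_rel; last lia.
  by apply: l_min; lia.
- by move=> k k_gt0 ltkN; rewrite cat_rel; [exact: l_good | lia].
Qed.

Section Factorization.
Variables (w A X M Y C : seq E) (I J : nat) (lw lX lY : nat -> nat).
Hypothesis w_fact : w = A ++ X ++ M ++ Y ++ C.
Hypothesis chain_w : left_chain (has_rel w) 0 (size w) (I + J) lw.
Hypothesis chain_X : left_chain (has_rel X) 0 (size X) I lX.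
Hypothesis chain_Y : left_chain (has_rel Y) 0 (size Y) J lY.

Let chain_X_in_w : left_chain (has_rel w) (size A) (size A + size X) I
  (fun k => size A + lX k).
Proof. by rewrite w_fact; apply: left_chain_cat. Qed.

Let chain_Y_in_w : left_chain (has_rel w) (size (A ++ X ++ M))
  (size (A ++ X ++ M) + size Y) J (fun k => size (A ++ X ++ M) + lY k).
Proof. by rewrite w_fact (catA X) (catA A); apply: left_chain_cat. Qed.

Lemma factor_start_nil : ~~ odd I -> A = [::].
Proof.
move=> evenI; apply/size0nil.
apply: (left_chain_parity (@has_rel_widen w) chain_w chain_X_in_w chain_Y_in_w) => //.
  by rewrite w_fact !size_cat; lia.
by rewrite !size_cat; lia.
Qed.

Lemma factor_end_nil : ~~ odd J -> C = [::].
Proof.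
move=> evenJ; apply/size0nil.
have := right_chain_parity (@has_rel_widen w)
  (right_chain_of_left (@has_rel_widen w) (@has_rel_long w) chain_w)
  (right_chain_of_left (@has_rel_widen w) (@has_rel_long w) chain_X_in_w)
  (right_chain_of_left (@has_rel_widen w) (@has_rel_long w) chain_Y_in_w).
by rewrite w_fact !size_cat; lia.
Qed.

End Factorization.

Lemma left_chain_suffix w M Y N lw J lY : w = M ++ Y ->
  left_chain (has_rel w) 0 (size w) N lw ->
  left_chain (has_rel Y) 0 (size Y) J lY -> lw J = size M.
Proof.
move=> -> chain_w chain_Y; have := left_chain_cat M [::] chain_Y.
rewrite cats0 -size_cat => chain_Y_in_w.
exact: (left_chain_agree (@has_rel_widen _) (@has_rel_long _) chain_w chain_Y_in_w).
Qed.

Lemma right_chain_prefix w X M N rw I lX : w = X ++ M ->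
  right_chain (has_rel w) 0 (size w) N rw ->
  left_chain (has_rel X) 0 (size X) I lX -> rw I = size X.
Proof.
move=> -> chain_w chain_X; have := left_chain_cat [::] M chain_X.
move=> /(right_chain_of_left (@has_rel_widen _) (@has_rel_long _)) chain_X_in_w.
apply: (right_chain_agree (@has_rel_widen _) (@has_rel_long _) chain_w chain_X_in_w).
by rewrite size_cat leq_addr.
Qed.

End Words.

(** * Decompositions of paths *)

Section Positions.
Variables (T : Type) (ws : seq (seq T)).

Definition lpos k := sumn (map size (drop k ws)).
Definition rpos k := sumn (map size (take k ws)).

Lemma size_flatten_rev : size (flatten (rev ws)) = lpos 0.
Proof. by rewrite size_flatten /shape map_rev sumn_rev /lpos drop0. Qed.

Lemma drop_lpos k : drop (lpos k) (flatten (rev ws)) = flatten (rev (take k ws)).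
Proof.
rewrite -{1}(cat_take_drop k ws) rev_cat flatten_cat drop_size_cat //.
by rewrite size_flatten /shape map_rev sumn_rev.
Qed.

Lemma take_lpos k : take (lpos k) (flatten (rev ws)) = flatten (rev (drop k ws)).
Proof.
rewrite -{1}(cat_take_drop k ws) rev_cat flatten_cat take_size_cat //.
by rewrite size_flatten /shape map_rev sumn_rev.
Qed.

Lemma lposS k : k < size ws -> lpos k = size (nth [::] ws k) + lpos k.+1.
Proof. by move=> ltk; rewrite /lpos (drop_nth [::] ltk). Qed.

Lemma seg_lpos k : k < size ws ->
  seg (flatten (rev ws)) (lpos k.+1) (lpos k) = nth [::] ws k.
Proof.
move=> ltk; rewrite /seg take_lpos (drop_nth [::] ltk) rev_cons flatten_rcons.
by rewrite drop_size_cat // size_flatten /shape map_rev sumn_rev.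
Qed.

Lemma seg_lpos2 k : k.+1 < size ws ->
  seg (flatten (rev ws)) (lpos k.+2) (lpos k) = nth [::] ws k.+1 ++ nth [::] ws k.
Proof.
move=> ltk; rewrite /seg take_lpos (drop_nth [::] (ltnW ltk)) (drop_nth [::] ltk).
rewrite !rev_cons !flatten_rcons -catA drop_size_cat //.
by rewrite size_flatten /shape map_rev sumn_rev.
Qed.

Lemma take_rpos k : take (rpos k) (flatten ws) = flatten (take k ws).
Proof.
by rewrite -{1}(cat_take_drop k ws) flatten_cat take_size_cat // size_flatten.
Qed.

Lemma rposS k : k < size ws -> rpos k.+1 = rpos k + size (nth [::] ws k).
Proof.
by move=> ltk; rewrite /rpos (take_nth [::] ltk) -cats1 map_cat sumn_cat /= addn0.
Qed.

Lemma seg_rpos k : k < size ws ->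
  seg (flatten ws) (rpos k) (rpos k.+1) = nth [::] ws k.
Proof.
move=> ltk; rewrite /seg take_rpos (take_nth [::] ltk) flatten_rcons.
by rewrite drop_size_cat // size_flatten.
Qed.

Lemma seg_rpos2 k : k.+1 < size ws ->
  seg (flatten ws) (rpos k) (rpos k.+2) = nth [::] ws k ++ nth [::] ws k.+1.
Proof.
move=> ltk; rewrite /seg take_rpos (take_nth [::] ltk) (take_nth [::] (ltnW ltk)).
by rewrite !flatten_rcons -catA drop_size_cat // size_flatten.
Qed.

End Positions.

Section Paths.
Variables (V E : finType) (s t : E -> V).

Lemma qvalid_cat v (X Y : seq E) :
  qvalid s t (v, X ++ Y) = qvalid s t (v, X) && qvalid s t (qtarget t (v, X), Y).
Proof.
case: X => [|x X] //; rewrite /qvalid /qtarget /= cat_path last_map.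
case: Y => [|y Y] /=; first by rewrite !andbT.
by rewrite (eq_sym (s y)); case: (path _ x X); case: (s x == v); case: (_ == _); case: (path _ y Y).
Qed.

Lemma qvalid_pcat (x y : qpath V E) :
  qvalid s t x -> qvalid s t y -> composable t x y -> qvalid s t (pcat x y).
Proof.
by case: x y => [vx X] [vy Y] valid_x valid_y /eqP xy; rewrite /pcat qvalid_cat valid_y xy.
Qed.

Lemma qtarget_pcat (x y : qpath V E) :
  composable t x y -> qtarget t (pcat x y) = qtarget t x.
Proof.
case: x y => [vx X] [vy Y] /eqP.
by rewrite /qtarget /pcat /= map_cat last_cat => ->.
Qed.

Lemma composable_pcat (x y z : qpath V E) :
  composable t x y -> composable t z x -> composable t z (pcat x y).
Proof. by move=> xy zx; rewrite /composable qtarget_pcat. Qed.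

Lemma qpath_eq (x y : qpath V E) :
  qvalid s t x -> qvalid s t y -> x.2 = y.2 -> qtarget t x = qtarget t y -> x = y.
Proof.
case: x y => [vx X] [vy Y] /= + + XY; rewrite -XY.
case: X {XY} => [|a X] /=; first by rewrite /qtarget /= => _ _ ->.
by rewrite /qvalid /= => /andP [_ /eqP <-] /andP [_ /eqP <-].
Qed.

Lemma trivialp_nil (x : qpath V E) : qvalid s t x -> x.2 = [::] -> trivialp s t x.
Proof. by move=> valid_x x_nil; rewrite /trivialp valid_x /qlen x_nil. Qed.

Lemma foldl_pcat_word (e : qpath V E) us :
  (foldl (@pcat V E) e us).2 = flatten (rev (map snd us)) ++ e.2.
Proof.
by elim: us e => [|u us IH] e //=; rewrite IH /= rev_cons flatten_rcons -catA.
Qed.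

Lemma foldl_pcat_valid (e : qpath V E) us :
  sorted (composable t) (e :: us) -> qvalid s t e -> all (qvalid s t) us ->
  qvalid s t (foldl (@pcat V E) e us) /\
  qtarget t (foldl (@pcat V E) e us) = qtarget t e.
Proof.
elim: us e => [|u us IH] e //= /andP [eu us_path] valid_e /andP [valid_u valid_us].
have [] := IH (pcat e u) _ (qvalid_pcat valid_e valid_u eu) valid_us.
  by case: us {IH valid_us} us_path.
by move=> -> ->; rewrite qtarget_pcat.
Qed.

Lemma foldl_rpcat (e : qpath V E) vs :
  foldl (fun acc v => pcat v acc) e vs = (e.1, e.2 ++ flatten (map snd vs)).
Proof.
elim: vs e => [|v vs IH] [v0 e] /=; first by rewrite cats0.
by rewrite IH /= catA.
Qed.

End Paths.

Section Decompositions.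
Variables (V E : finType) (s t : E -> V) (R : seq (seq E)).
Hypothesis R_long : forall r, r \in R -> 1 < size r.

Lemma suffix_free_drop (u : qpath V E) d :
  qvalid s t u -> (forall q, is_suffix s t q u -> q <> u -> ~~ inI R q) -> 0 < d ->
  ~~ has (fun r => infix r (drop d u.2)) R.
Proof.
case: u => v U /= valid_u; rewrite /inI => u_free d_gt0.
have [lt_d|le_d] := ltnP d (size U); last first.
  by rewrite drop_oversize //; apply/hasPn => -[|x r] // /R_long.
have /andP [valid_a valid_q] :
    qvalid s t (v, take d U) && qvalid s t (qtarget t (v, take d U), drop d U).
  by rewrite -qvalid_cat cat_take_drop.
apply: (u_free (qtarget t (v, take d U), drop d U)).
  split=> //; exists (v, take d U).
  by split=> //; [rewrite /composable | rewrite /pcat /= cat_take_drop].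
by case=> _ /(congr1 size); rewrite size_drop; lia.
Qed.

Lemma prefix_free_take (u : qpath V E) d :
  qvalid s t u -> (forall q, is_prefix s t q u -> q <> u -> ~~ inI R q) ->
  d < size u.2 -> ~~ has (fun r => infix r (take d u.2)) R.
Proof.
case: u => v U /= valid_u; rewrite /inI => u_free lt_d.
have /andP [valid_q valid_b] :
    qvalid s t (v, take d U) && qvalid s t (qtarget t (v, take d U), drop d U).
  by rewrite -qvalid_cat cat_take_drop.
apply: (u_free (v, take d U)).
  split=> //; exists (qtarget t (v, take d U), drop d U).
  by split=> //; [rewrite /composable | rewrite /pcat /= cat_take_drop].
by case=> /(congr1 size); rewrite size_take lt_d; lia.
Qed.

Lemma left_decomp_chain p e us : left_decomp s t R p e us ->
  p.2 = flatten (rev (map snd us)) /\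
  left_chain (has_rel R p.2) 0 (size p.2) (size us) (lpos (map snd us)).
Proof.
case=> e_triv u0_arrow us_B [us_sorted p_eq] us_rel.
have e_nil : e.2 = [::] by case/andP: e_triv => _ /nilP.
have u0_size : 0 < size us -> size (nth e us 0).2 = 1.
  by case: us u0_arrow {us_B us_sorted p_eq us_rel} => // u0 us /andP [_ /eqP].
have p_word : p.2 = flatten (rev (map snd us)).
  by rewrite p_eq foldl_pcat_word e_nil cats0.
split=> //; rewrite p_word; set ws := map snd us.
have size_ws : size ws = size us by rewrite size_map.
have ws_nth k : k < size us -> nth [::] ws k = (nth e us k).2.
  by move=> ltk; rewrite (nth_map e).
have us_B_nth k : k < size us -> inB s t R (nth e us k).
  by move=> ltk; apply: (all_nthP e us_B).
split.
- by rewrite size_flatten_rev.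
- by rewrite /lpos drop_oversize ?size_ws.
- by move=> us_gt0; rewrite lposS ?size_ws // ws_nth // u0_size.
- move=> k ltk; have [u_rel u_free] := us_rel k ltk.
  set u := pcat _ _ in u_rel u_free.
  have seg_u : seg (flatten (rev ws)) (lpos ws k.+2) (lpos ws k) = u.2.
    by rewrite seg_lpos2 ?size_ws // !ws_nth //; lia.
  have valid_u : qvalid s t u.
    have /andP [valid_uk _] := us_B_nth k (ltnW ltk).
    have /andP [valid_uk1 _] := us_B_nth k.+1 ltk.
    by apply: qvalid_pcat => //; move/(pathP e): us_sorted => /(_ k.+1 ltk).
  split; first by rewrite /has_rel seg_u.
  move=> z ltz; rewrite /has_rel (seg_drop _ _ (ltnW ltz)) seg_u.
  by apply: suffix_free_drop; rewrite ?subn_gt0.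
- move=> k _ ltk; rewrite /has_rel seg_lpos ?size_ws // ws_nth //.
  by case/andP: (us_B_nth k ltk).
Qed.

Lemma right_decomp_chain p e vs : right_decomp s t R p e vs ->
  p = (e.1, flatten (map snd vs)) /\
  right_chain (has_rel R p.2) 0 (size p.2) (size vs) (rpos (map snd vs)).
Proof.
case=> e_triv v0_arrow vs_B [vs_sorted p_eq] vs_rel.
have e_nil : e.2 = [::] by case/andP: e_triv => _ /nilP.
have v0_size : 0 < size vs -> size (nth e vs 0).2 = 1.
  by case: vs v0_arrow {vs_B vs_sorted p_eq vs_rel} => // v0 vs /andP [_ /eqP].
have p_pair : p = (e.1, flatten (map snd vs)) by rewrite p_eq foldl_rpcat e_nil.
split=> //; rewrite p_pair /=; set ws := map snd vs.
have size_ws : size ws = size vs by rewrite size_map.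
have ws_nth k : k < size vs -> nth [::] ws k = (nth e vs k).2.
  by move=> ltk; rewrite (nth_map e).
have vs_B_nth k : k < size vs -> inB s t R (nth e vs k).
  by move=> ltk; apply: (all_nthP e vs_B).
split.
- by rewrite /rpos take0.
- by rewrite size_flatten /rpos take_oversize ?size_ws.
- by move=> vs_gt0; rewrite rposS ?size_ws // ws_nth // v0_size // addn1.
- move=> k ltk; have [u_rel u_free] := vs_rel k ltk.
  set u := pcat _ _ in u_rel u_free.
  have seg_u : seg (flatten ws) (rpos ws k) (rpos ws k.+2) = u.2.
    by rewrite seg_rpos2 ?size_ws // !ws_nth //; lia.
  have size_u : size u.2 = rpos ws k.+2 - rpos ws k.
    by rewrite /= size_cat -!ws_nth ?(rposS (ws := ws) _) ?size_ws //; lia.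
  have valid_u : qvalid s t u.
    have /andP [valid_vk _] := vs_B_nth k (ltnW ltk).
    have /andP [valid_vk1 _] := vs_B_nth k.+1 ltk.
    by apply: qvalid_pcat => //; move/(pathP e): vs_sorted => /(_ k.+1 ltk).
  have bad_u : has_rel R (flatten ws) (rpos ws k) (rpos ws k.+2).
    by rewrite /has_rel seg_u.
  split=> // z ltz; rewrite /has_rel (seg_take _ _ (ltnW ltz)) seg_u.
  apply: prefix_free_take => //; have := has_rel_long R_long bad_u; lia.
- move=> k _ ltk; rewrite /has_rel seg_rpos ?size_ws // ws_nth //.
  by case/andP: (vs_B_nth k ltk).
Qed.

Lemma Gamma_left_chain m p : Gamma s t R m p ->
  exists l, left_chain (has_rel R p.2) 0 (size p.2) `|(m + 1)%R| l.
Proof.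
by case=> _ [e [us [size_us /left_decomp_chain [_ chain]]]]; rewrite -size_us; exists (lpos (map snd us)).
Qed.

Lemma left_decomp_valid p e us : left_decomp s t R p e us ->
  qvalid s t p /\ qtarget t p = qtarget t e.
Proof.
case=> /andP [valid_e _] _ us_B [us_sorted ->] _.
by apply: foldl_pcat_valid => //; apply: sub_all us_B => u /andP [].
Qed.

Lemma Gamma_valid m p : Gamma s t R m p -> qvalid s t p.
Proof. by case=> _ [e [us [_ /left_decomp_valid []]]]. Qed.

Lemma amb_sigma_eq m p e us (q : qpath V E) M :
  left_decomp s t R p e us -> Gamma s t R m q -> p.2 = M ++ q.2 ->
  qtarget t q = qtarget t p -> q = amb_sigma m e us.
Proof.
move=> decomp q_amb p_fact target_q.
have [p_word chain_p] := left_decomp_chain decomp.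
have [l chain_q] := Gamma_left_chain q_amb.
have lpos_M := left_chain_suffix R_long p_fact chain_p chain_q.
have [_ target_p] := left_decomp_valid decomp.
case: decomp => /andP [valid_e /nilP e_nil] _ us_B [us_sorted _] _.
have valid_us : all (qvalid s t) us by apply: sub_all us_B => u /andP [].
set k := `|(m + 1)%R| in lpos_M *.
have sorted_take : sorted (composable t) (e :: take k us).
  by move: us_sorted; rewrite -{1}(cat_take_drop k us) -cat_cons => /cat_sorted2 [].
have valid_take : all (qvalid s t) (take k us).
  by move: valid_us; rewrite -{1}(cat_take_drop k us) all_cat => /andP [].
have [valid_sigma target_sigma] := foldl_pcat_valid sorted_take valid_e valid_take.
apply: (qpath_eq (Gamma_valid q_amb) valid_sigma).
  rewrite /amb_sigma foldl_pcat_word e_nil cats0 map_take -drop_lpos -p_word.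
  by rewrite lpos_M p_fact drop_size_cat.
by rewrite target_q target_p /amb_sigma target_sigma.
Qed.

Lemma amb_pi_eq m p e vs (q : qpath V E) M :
  right_decomp s t R p e vs -> Gamma s t R m q -> p.2 = q.2 ++ M -> q.1 = p.1 ->
  q = amb_pi m e vs.
Proof.
move=> decomp q_amb p_fact start_q.
have [p_pair chain_p] := right_decomp_chain decomp.
have [l chain_q] := Gamma_left_chain q_amb.
have rpos_q := right_chain_prefix R_long p_fact chain_p chain_q.
case: decomp => /andP [_ /nilP e_nil] _ _ _ _.
rewrite /amb_pi foldl_rpcat e_nil map_take -take_rpos rpos_q /=.
move: p_fact start_q; rewrite p_pair /= => -> <-.
by rewrite take_size_cat // -surjective_pairing.
Qed.

End Decompositions.

Lemma odd_abszS (i : int) : (-1 <= i)%R -> odd `|(i + 1)%R| = ~~ odd `|i|.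
Proof.
case: i => [k|[|k]] // _.
by rewrite (_ : (Posz k + 1)%R = Posz k.+1) // -addn1 PoszD.
Qed.

Unset Implicit Arguments.
Import Order.TTheory GRing.Theory Num.Theory.

Theorem mainTheorem10 (V E : finType) (s t : E -> V) (R : seq (seq E))
  (HR : forall r, r \in R -> is_relation s t r)
  (Hfd : exists N : nat, forall p : qpath V E,
           qvalid s t p -> (N <= qlen p)%N -> inI R p)
  (n : nat) (i j : int)
  (Hi : (-1 <= i)%R) (Hj : (-1 <= j)%R) (Hij : (i + j = n%:Z - 1)%R)
  (p a b c q1 q2 : qpath V E)
  (Hp : Gamma s t R n%:Z p) (Hq1 : Gamma s t R i q1) (Hq2 : Gamma s t R j q2)
  (Ha : qvalid s t a) (Hb : qvalid s t b) (Hc : qvalid s t c)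
  (Hca : [/\ composable t q1 a, composable t b q1,
             composable t q2 b & composable t c q2])
  (Hdec : p = pcat c (pcat q2 (pcat b (pcat q1 a)))) :
  [/\ (odd `|i|%N -> trivialp s t a),
      (odd `|j|%N -> trivialp s t c) &
      (odd `|i|%N -> odd `|j|%N ->
        trivialp s t a /\ trivialp s t c /\
        (forall e us, left_decomp s t R p e us -> q2 = amb_sigma j e us) /\
        (forall e vs, right_decomp s t R p e vs -> q1 = amb_pi i e vs))].
Proof.
have R_long r : r \in R -> (1 < size r)%N by move=> /HR /andP [].
case: Hca => q1a bq1 q2b cq2.
have p_fact : p.2 = a.2 ++ q1.2 ++ b.2 ++ q2.2 ++ c.2 by rewrite Hdec /= -!catA.
have [lp chain_p] := Gamma_left_chain R_long Hp.
have [l1 chain_q1] := Gamma_left_chain R_long Hq1.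
have [l2 chain_q2] := Gamma_left_chain R_long Hq2.
rewrite (_ : `|(n%:Z + 1)%R| = (`|(i + 1)%R| + `|(j + 1)%R|)%N) in chain_p; last by lia.
have a_nil : odd `|i| -> a.2 = [::].
  move=> odd_i; apply: (factor_start_nil R_long p_fact chain_p chain_q1 chain_q2).
  by rewrite odd_abszS // odd_i.
have c_nil : odd `|j| -> c.2 = [::].
  move=> odd_j; apply: (factor_end_nil R_long p_fact chain_p chain_q1 chain_q2).
  by rewrite odd_abszS // odd_j.
split=> [/a_nil|/c_nil|/a_nil a_nil' /c_nil c_nil']; try exact: trivialp_nil.
do 2 (split; first exact: trivialp_nil).
split=> [e us decomp|e vs decomp].
- apply: (amb_sigma_eq R_long decomp Hq2 (M := a.2 ++ q1.2 ++ b.2)).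
    by rewrite p_fact c_nil' cats0 -!catA.
  rewrite Hdec qtarget_pcat; last by do 3 apply: composable_pcat => //.
  by move: cq2 => /eqP; rewrite /qtarget c_nil'.
- apply: (amb_pi_eq R_long decomp Hq1 (M := b.2 ++ q2.2 ++ c.2)).
    by rewrite p_fact a_nil'.
  by rewrite Hdec; move: q1a => /eqP; rewrite /qtarget a_nil'.
Qed.
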